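(* Let $(\mathcal{C},\mathbb{E},\mathfrak{s})$ be an extriangulated category with enough injective objects and let $\mathcal{I}$ be a special precovering ideal of $\mathcal{C}$. Then condition (J) holds for $\mathcal{I}$ if and only if $\mathcal{I}^{\perp_{\mathbb{E}}}$ is an object ideal; and in this case, for any object ideal $\mathcal{J}$ witnessing (J), $\mathcal{I}^{\perp_{\mathbb{E}}}=\langle\mathrm{Ob}(\mathcal{J})\diamond\mathrm{Ob}(\mathbb{E}\text{-}\mathrm{inj})\rangle$.
   Context: An extriangulated category $(\mathcal{C},\mathbb{E},\mathfrak{s})$ (Nakaoka–Palu): additive $\mathcal{C}$, biadditive $\mathbb{E}:\mathcal{C}^{\mathrm{op}}\times\mathcal{C}\to\mathrm{Ab}$, additive realization $\mathfrak{s}$ assigning to each $\delta\in\mathbb{E}(C,A)$ an equivalence class of sequences $A\to B\to C$, forming $\mathbb{E}$-triangles $A\to B\to C\overset{\delta}{\dashrightarrow}$, satisfying (ET1)–(ET4), (ET3)$^{\mathrm{op}}$, (ET4)$^{\mathrm{op}}$. Notation $a_\star\delta=\mathbb{E}(C,a)(\delta)$, $c^\star\delta=\mathbb{E}(c,A)(\delta)$; a morphism of $\mathbb{E}$-triangles is a commuting triple $(a,b,c)$ with $a_\star\delta=c^\star\delta'$. Enough injective objects: every $A$ admits an $\mathbb{E}$-triangle $A\to E\to C\overset{\delta}{\dashrightarrow}$ with $E$ injective ($\mathbb{E}(-,E)=0$). $\mathbb{E}\text{-}\mathrm{inj}$: morphisms $i:A\to Y$ with $i_\star\delta=0$ for all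 $\delta\in\mathbb{E}(C,A)$; so $\mathrm{Ob}(\mathbb{E}\text{-}\mathrm{inj})$ is the class of injective objects. Ideal: class of morphisms with zeros, closed under sums and two-sided composition. $\mathcal{I}^{\perp_{\mathbb{E}}}=\{g:A\to Y\mid m^\star g_\star\delta=0\ \forall m\in\mathcal{I},\,m:X\to C,\ \forall\delta\in\mathbb{E}(C,A)\}$. For a class $\mathcal{K}$ of morphisms, $\mathrm{Ob}(\mathcal{K})=\{A\mid\mathrm{id}_A\in\mathcal{K}\}$, $\langle\mathcal{K}\rangle$ is the smallest ideal containing $\mathcal{K}$ (for a class of objects, the smallest ideal containing their identities), and $\mathcal{K}$ is an object ideal if $\mathcal{K}=\langle\mathrm{Ob}(\mathcal{K})\rangle$; write $A\in\mathcal{K}$ for $A\in\mathrm{Ob}(\mathcal{K})$. For classes of objects $\mathcal{X},\mathcal{Y}$: $\mathcal{X}\diamond\mathcal{Y}$ is the class of $Z$ admitting an $\mathbb{E}$-triangle $X\to Z\to Y\overset{\delta}{\dashrightarrow}$ with $X\in\mathcal{X}$, $Y\in\mathcal{Y}$. An $\mathcal{I}$-precover of $C$: $i:X\to C$ in $\mathcal{I}$ through which every morphism $X'\to C$ in $\mathcal{I}$ factors. A special $\mathcal{I}$-precover of $C$: $i:X\to C$ in $\mathcal{I}$ with $\mathbb{E}$-triangles $A\to B\to C\overset{\delta}{\dashrightarrow}$, $A'\to X\xrightarrow{i}C\overset{\delta'}{\dashrightarrow}$ and a morphism $(j,b,\mathrm{id}_C)$ between them, $j\in\mathcal{I}^{\perp_{\mathbb{E}}}$;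 $\mathcal{I}$ is special precovering if every object has one. Condition (J) for an ideal $\mathcal{I}$: there exists an object ideal $\mathcal{J}\subseteq\mathcal{I}^{\perp_{\mathbb{E}}}$ such that every $C\in\mathcal{C}$ admits an $\mathcal{I}$-precover $i:X\to C$ together with an $\mathbb{E}$-triangle $A\to X\xrightarrow{i}C\overset{\delta}{\dashrightarrow}$ with $A\in\mathcal{J}$. *)

From HB Require Import structures.
From mathcomp Require Import all_boot all_algebra.
Set Implicit Arguments. Unset Strict Implicit. Unset Printing Implicit Defensive.
Import GRing.Theory.
Local Open Scope ring_scope.

Record addCat := AddCat {
  ob :> Type;
  hom : ob -> ob -> zmodType;
  comp : forall A B C : ob, hom B C -> hom A B -> hom A C;  (* comp g f = g o f *)
  idm : forall A : ob, hom A A;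
  compA : forall A B C D (h : hom C D) (g : hom B C) (f : hom A B),
      comp h (comp g f) = comp (comp h g) f;
  comp1m : forall A B (f : hom A B), comp (idm B) f = f;
  compm1 : forall A B (f : hom A B), comp f (idm A) = f;
  comp_addl : forall A B C (g g' : hom B C) (f : hom A B),
      comp (g + g') f = comp g f + comp g' f;
  comp_addr : forall A B C (g : hom B C) (f f' : hom A B),
      comp g (f + f') = comp g f + comp g f';
  zob : ob;
  zob_id : idm zob = 0;
  bsum : ob -> ob -> ob;
  binl : forall A B, hom A (bsum A B);
  binr : forall A B, hom B (bsum A B);
  bprl : forall A B, hom (bsum A B) A;
  bprr : forall A B, hom (bsum A B) B;
  bprl_inl : forall A B, comp (bprl A B) (binl A B) = idm A;
  bprr_inr : forall A B, comp (bprr A B) (binr A B) = idm B;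
  bprl_inr : forall A B, comp (bprl A B) (binr A B) = 0;
  bprr_inl : forall A B, comp (bprr A B) (binl A B) = 0;
  bsum_id : forall A B,
      comp (binl A B) (bprl A B) + comp (binr A B) (bprr A B)
      = idm (bsum A B)
}.

Arguments hom {a} _ _.
Arguments comp {a A B C} _ _.
Arguments idm {a} _.
Arguments bsum {a} _ _.
Arguments binl {a} _ _.
Arguments binr {a} _ _.
Arguments bprl {a} _ _.
Arguments bprr {a} _ _.

Definition mor_dsum (C : addCat) (A A' B B' : C) (f : hom A B) (g : hom A' B')
  : hom (bsum A A') (bsum B B') :=
  comp (binl B B') (comp f (bprl A A')) + comp (binr B B') (comp g (bprr A A')).

Definition is_iso (C : addCat) (A B : C) (f : hom A B) : Prop :=
  exists g : hom B A, comp g f = idm A /\ comp f g = idm B.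

(* A biadditive functor E : C^op x C -> Ab  (axiom (ET1)).
   ext Z A = E(Z, A);  push a d = a_* d;  pull c d = c^* d.            *)
Record biaddFunctor (C : addCat) := BiaddFunctor {
  ext : C -> C -> zmodType;
  push : forall (Z A A' : C), hom A A' -> ext Z A -> ext Z A';
  pull : forall (Z' Z A : C), hom Z' Z -> ext Z A -> ext Z' A;
  push_id : forall Z A (d : ext Z A), push (idm A) d = d;
  push_comp : forall Z A A' A'' (a : hom A A') (a' : hom A' A'') (d : ext Z A),
      push (comp a' a) d = push a' (push a d);
  pull_id : forall Z A (d : ext Z A), pull (idm Z) d = d;
  pull_comp : forall Z'' Z' Z A (c' : hom Z'' Z') (c : hom Z' Z) (d : ext Z A),
      pull (comp c c') d = pull c' (pull c d);
  push_pull : forall Z' Z A A' (a : hom A A') (c : hom Z' Z) (d : ext Z A),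
      push a (pull c d) = pull c (push a d);
  push_addd : forall Z A A' (a : hom A A') (d d' : ext Z A),
      push a (d + d') = push a d + push a d';
  pull_addd : forall Z' Z A (c : hom Z' Z) (d d' : ext Z A),
      pull c (d + d') = pull c d + pull c d';
  push_addm : forall Z A A' (a a' : hom A A') (d : ext Z A),
      push (a + a') d = push a d + push a' d;
  pull_addm : forall Z' Z A (c c' : hom Z' Z) (d : ext Z A),
      pull (c + c') d = pull c d + pull c' d
}.

Arguments ext {C} _ _ _.
Arguments push {C} _ {Z A A'} _ _.
Arguments pull {C} _ {Z' Z A} _ _.

(* d (+) d' in E(Z (+) Z', A (+) A'), corresponding to (d, 0, 0, d') under
   E(Z(+)Z', A(+)A') = E(Z,A) (+) E(Z,A') (+) E(Z',A) (+) E(Z',A'). *)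
Definition ext_dsum (C : addCat) (E : biaddFunctor C) (Z Z' A A' : C)
  (d : ext E Z A) (d' : ext E Z' A') : ext E (bsum Z Z') (bsum A A') :=
  push E (binl A A') (pull E (bprl Z Z') d)
  + push E (binr A A') (pull E (bprr Z Z') d').

Definition seq_equiv (C : addCat) (A B B' Z : C)
  (x : hom A B) (y : hom B Z) (x' : hom A B') (y' : hom B' Z) : Prop :=
  exists b : hom B B', is_iso b /\ comp b x = x' /\ comp y' b = y.

(* Extriangulated categories.  [realizes d x y] means that the sequence
   A -x-> B -y-> Z belongs to the class s(d), d in E(Z, A).            *)
Record extriCat := ExtriCat {
  cat :> addCat;
  E : biaddFunctor cat;
  realizes : forall (Z A : cat), ext E Z A -> forall B : cat, hom A B -> hom B Z -> Prop;
  real_ex : forall Z A (d : ext E Z A), exists B (x : hom A B) (y : hom B Z), realizes d x y;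
  real_class : forall Z A (d : ext E Z A) B (x : hom A B) (y : hom B Z)
      B' (x' : hom A B') (y' : hom B' Z),
      realizes d x y -> (realizes d x' y' <-> seq_equiv x y x' y');
  real_morph : forall Z A (d : ext E Z A) B (x : hom A B) (y : hom B Z)
      Z' A' (d' : ext E Z' A') B' (x' : hom A' B') (y' : hom B' Z')
      (a : hom A A') (c : hom Z Z'),
      realizes d x y -> realizes d' x' y' -> push E a d = pull E c d' ->
      exists b : hom B B', comp b x = comp x' a /\ comp c y = comp y' b;
  real_zero : forall Z A : cat, realizes (0 : ext E Z A) (binl A Z) (bprr A Z);
  real_dsum : forall Z A (d : ext E Z A) B (x : hom A B) (y : hom B Z)
      Z' A' (d' : ext E Z' A') B' (x' : hom A' B') (y' : hom B' Z'),
      realizes d x y -> realizes d' x' y' ->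
      realizes (ext_dsum d d') (mor_dsum x x') (mor_dsum y y');
  ET3 : forall Z A (d : ext E Z A) B (x : hom A B) (y : hom B Z)
      Z' A' (d' : ext E Z' A') B' (x' : hom A' B') (y' : hom B' Z')
      (a : hom A A') (b : hom B B'),
      realizes d x y -> realizes d' x' y' -> comp b x = comp x' a ->
      exists c : hom Z Z', comp c y = comp y' b /\ push E a d = pull E c d';
  ET3op : forall Z A (d : ext E Z A) B (x : hom A B) (y : hom B Z)
      Z' A' (d' : ext E Z' A') B' (x' : hom A' B') (y' : hom B' Z')
      (b : hom B B') (c : hom Z Z'),
      realizes d x y -> realizes d' x' y' -> comp c y = comp y' b ->
      exists a : hom A A', comp b x = comp x' a /\ push E a d = pull E c d';
  ET4 : forall (A B C D F : cat) (d : ext E D A) (f : hom A B) (f' : hom B D)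
      (d' : ext E F B) (g : hom B C) (g' : hom C F),
      realizes d f f' -> realizes d' g g' ->
      exists (Eo : cat) (h : hom A C) (h' : hom C Eo) (dd : hom D Eo) (e : hom Eo F)
             (d'' : ext E Eo A),
        (h = comp g f /\ comp dd f' = comp h' g /\ comp e h' = g') /\
        realizes d'' h h' /\
        realizes (push E f' d') dd e /\
        pull E dd d'' = d /\
        push E f d'' = pull E e d';
  ET4op : forall (A B C D F : cat) (d : ext E B D) (f' : hom D A) (f : hom A B)
      (d' : ext E C F) (g' : hom F B) (g : hom B C),
      realizes d f' f -> realizes d' g' g ->
      exists (Eo : cat) (dd : hom D Eo) (e : hom Eo F) (h' : hom Eo A) (h : hom A C)
             (d'' : ext E C Eo),
        (comp h' dd = f' /\ comp f h' = comp g' e /\ h = comp g f) /\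
        realizes d'' h' h /\
        realizes (pull E g' d) dd e /\
        d' = push E e d'' /\
        push E dd d = pull E g d''
}.

Arguments realizes {e Z A} _ {B} _ _.

Section Notions.
Variable C : extriCat.

Definition morclass := forall A B : C, hom A B -> Prop.
Definition objclass := C -> Prop.

Definition is_ideal (I : morclass) : Prop :=
  [/\ (forall A B : C, I A B 0),
      (forall A B (f g : hom A B), I A B f -> I A B g -> I A B (f + g))
    & (forall A B X Y (h : hom X A) (f : hom A B) (g : hom B Y),
          I A B f -> I X Y (comp g (comp f h)))].

Definition Obj (K : morclass) : objclass := fun A => K A A (idm A).

Definition gen_ideal (K : morclass) : morclass :=
  fun A B f => forall I : morclass, is_ideal I ->
    (forall X Y (g : hom X Y), K X Y g -> I X Y g) -> I A B f.

Definition gen_obj_ideal (P : objclass) : morclass :=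
  fun A B f => forall I : morclass, is_ideal I ->
    (forall X, P X -> I X X (idm X)) -> I A B f.

Definition same_class (K L : morclass) : Prop :=
  forall A B (f : hom A B), K A B f <-> L A B f.

Definition sub_class (K L : morclass) : Prop :=
  forall A B (f : hom A B), K A B f -> L A B f.

Definition object_ideal (K : morclass) : Prop :=
  same_class K (gen_obj_ideal (Obj K)).

Definition Etri (Z A B : C) (d : ext (E C) Z A) (x : hom A B) (y : hom B Z) : Prop :=
  realizes d x y.

Definition Etri_morph (Z A B Z' A' B' : C)
  (d : ext (E C) Z A) (x : hom A B) (y : hom B Z)
  (d' : ext (E C) Z' A') (x' : hom A' B') (y' : hom B' Z')
  (a : hom A A') (b : hom B B') (c : hom Z Z') : Prop :=
  [/\ comp b x = comp x' a, comp c y = comp y' b & push (E C) a d = pull (E C) c d'].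

Definition Einj : morclass :=
  fun A Y i => forall Z (d : ext (E C) Z A), push (E C) i d = 0.

Definition injective_obj (X : C) : Prop := forall Z (d : ext (E C) Z X), d = 0.

Definition enough_injectives : Prop :=
  forall A : C, exists (Eo Z : C) (x : hom A Eo) (y : hom Eo Z) (d : ext (E C) Z A),
    Etri d x y /\ injective_obj Eo.

Definition perpE (I : morclass) : morclass :=
  fun A Y g => forall (X Z : C) (m : hom X Z), I X Z m ->
    forall d : ext (E C) Z A, pull (E C) m (push (E C) g d) = 0.

Definition diamond (P Q : objclass) : objclass :=
  fun B => exists (A Z : C) (x : hom A B) (y : hom B Z) (d : ext (E C) Z A),
    [/\ P A, Q Z & Etri d x y].

Definition precover (I : morclass) (Z X : C) (i : hom X Z) : Prop :=
  I X Z i /\ forall X' (i' : hom X' Z), I X' Z i' -> exists h : hom X' X, i' = comp i h.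

Definition special_precover (I : morclass) (Z X : C) (i : hom X Z) : Prop :=
  I X Z i /\
  exists (A B A' : C) (x : hom A B) (y : hom B Z) (d : ext (E C) Z A)
         (x' : hom A' X) (d' : ext (E C) Z A') (j : hom A A') (b : hom B X),
    [/\ Etri d x y, Etri d' x' i, Etri_morph d x y d' x' i j b (idm Z)
      & perpE I j].

Definition special_precovering (I : morclass) : Prop :=
  forall Z : C, exists (X : C) (i : hom X Z), special_precover I i.

Definition condJ_witness (I J : morclass) : Prop :=
  [/\ object_ideal J, sub_class J (perpE I)
    & forall Z : C, exists (X A : C) (i : hom X Z) (a : hom A X) (d : ext (E C) Z A),
        [/\ precover I i, Etri d a i & Obj J A]].

Definition condJ (I : morclass) : Prop := exists J, condJ_witness I J.

End Notions.

(** The inclusion of [<Ob(J) ◇ Ob(E-inj)>] in [I^⊥] holds because an object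
    [B] sitting in [A -> B -> E] with [A] in [Ob(I^⊥)] and [E] injective is
    again in [Ob(I^⊥)]: every extension ending in [B] is pushed forward from
    one ending in [A].  Conversely, given [g : A -> Y] in [I^⊥], take
    [A -> E0 -> Z] with [E0] injective and an [I]-precover [A' -> X -> Z]
    with [A'] in [Ob(J)]; realize the sum of the two extensions as
    [A' ⊕ A -> M -> Z].  Octahedra against the split triangles of [A' ⊕ A]
    exhibit [M] in [Ob(J) ◇ Ob(E-inj)] and an [E]-triangle [A -> M -> X'] with
    [X' ≅ X], whose class is pulled back along a morphism of [I]; hence [g]
    kills it and factors through [A -> M].
    In particular (J) makes [I^⊥] an object ideal.  Conversely, if [I^⊥] is
    an object ideal, the morphism [j] of a special precover factors as
    [A -u-> W -> A'] with [W] in [Ob(I^⊥)], and a realization [W -> N -> Z]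
    of [u_* δ] maps to the special precover, so [N -> Z] lies in [I]; every
    morphism of [I] into [Z] kills [u_* δ] and so lifts to [N]. *)
From HB Require Import structures.
From mathcomp Require Import all_boot all_algebra.
From Pilot Require Import Defs.
Set Implicit Arguments. Unset Strict Implicit. Unset Printing Implicit Defensive.
Import GRing.Theory.
Local Open Scope ring_scope.

Section AdditiveCategory.
Variable C : addCat.

Lemma comp0m (A B D : C) (f : hom A B) : comp (0 : hom B D) f = 0.
Proof. by apply: (@addrI _ (comp 0 f)); rewrite -comp_addl !addr0. Qed.

Lemma compm0 (A B D : C) (f : hom B D) : comp f (0 : hom A B) = 0.
Proof. by apply: (@addrI _ (comp f 0)); rewrite -comp_addr !addr0. Qed.

Lemma bprl_binlK (A B X : C) (f : hom X A) : comp (bprl A B) (comp (binl A B) f) = f.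
Proof. by rewrite compA bprl_inl comp1m. Qed.

Lemma bprr_binrK (A B X : C) (f : hom X B) : comp (bprr A B) (comp (binr A B) f) = f.
Proof. by rewrite compA bprr_inr comp1m. Qed.

Lemma bprl_binr0 (A B X : C) (f : hom X B) : comp (bprl A B) (comp (binr A B) f) = 0.
Proof. by rewrite compA bprl_inr comp0m. Qed.

Lemma bprr_binl0 (A B X : C) (f : hom X A) : comp (bprr A B) (comp (binl A B) f) = 0.
Proof. by rewrite compA bprr_inl comp0m. Qed.

Variable F : biaddFunctor C.

Lemma push0m (Z A A' : C) (d : ext F Z A) : push F (0 : hom A A') d = 0.
Proof. by apply: (@addrI _ (push F 0 d)); rewrite -push_addm !addr0. Qed.

Lemma pushm0 (Z A A' : C) (a : hom A A') : push F a (0 : ext F Z A) = 0.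
Proof. by apply: (@addrI _ (push F a 0)); rewrite -push_addd !addr0. Qed.

Lemma pullm0 (Z' Z A : C) (c : hom Z' Z) : pull F c (0 : ext F Z A) = 0.
Proof. by apply: (@addrI _ (pull F c 0)); rewrite -pull_addd !addr0. Qed.

Definition ext_pair (Z A1 A2 : C) (d1 : ext F Z A1) (d2 : ext F Z A2) :
    ext F Z (bsum A1 A2) :=
  push F (binl A1 A2) d1 + push F (binr A1 A2) d2.

Lemma push_bprl_pair (Z A1 A2 : C) (d1 : ext F Z A1) (d2 : ext F Z A2) :
  push F (bprl A1 A2) (ext_pair d1 d2) = d1.
Proof. by rewrite push_addd -!push_comp bprl_inl bprl_inr push0m push_id addr0. Qed.

Lemma push_bprr_pair (Z A1 A2 : C) (d1 : ext F Z A1) (d2 : ext F Z A2) :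
  push F (bprr A1 A2) (ext_pair d1 d2) = d2.
Proof. by rewrite push_addd -!push_comp bprr_inl bprr_inr push0m push_id add0r. Qed.

End AdditiveCategory.

Ltac biprod_simpl :=
  repeat progress rewrite ?comp_addl ?comp_addr -?compA ?bprl_binlK ?bprr_binrK
    ?bprl_binr0 ?bprr_binl0 ?compm0 ?comp0m ?bprl_inl ?bprr_inr ?bprl_inr ?bprr_inl
    ?compm1 ?comp1m ?addr0 ?add0r.

Section Extriangulated.
Variable C : extriCat.
Local Notation push := (Defs.push (E C)).
Local Notation pull := (Defs.pull (E C)).

Lemma deflation_factor (Z A B W : C) (d : ext (E C) Z A) (x : hom A B) (y : hom B Z)
    (c : hom W Z) :
  realizes d x y -> pull c d = 0 -> exists t : hom W B, comp y t = c.
Proof.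
move=> Hd Hc.
have Hcd : push (idm A) (0 : ext (E C) W A) = pull c d by rewrite push_id Hc.
have [b [_ Hb]] := real_morph (real_zero W A) Hd Hcd.
by exists (comp b (binr A W)); rewrite compA -Hb -compA bprr_inr compm1.
Qed.

Lemma inflation_factor (Z A B Y : C) (d : ext (E C) Z A) (x : hom A B) (y : hom B Z)
    (g : hom A Y) :
  realizes d x y -> push g d = 0 -> exists v : hom B Y, comp v x = g.
Proof.
move=> Hd Hg.
have Hgd : push g d = pull (idm Z) (0 : ext (E C) Z Y) by rewrite pull_id Hg.
have [b [Hb _]] := real_morph Hd (real_zero Z Y) Hgd.
by exists (comp (bprl Y Z) b); rewrite -compA Hb compA bprl_inl comp1m.
Qed.

Lemma realizes0_split (Z A B : C) (x : hom A B) (y : hom B Z) :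
  realizes (0 : ext (E C) Z A) x y -> exists s : hom Z B, comp y s = idm Z.
Proof. by move=> Hd; apply: (deflation_factor Hd); rewrite pullm0. Qed.

Lemma realizes0_swap (A A' : C) :
  realizes (0 : ext (E C) A A') (binr A A') (bprl A A').
Proof.
apply/(real_class _ _ (real_zero A A')).
exists (comp (binr A A') (bprl A' A) + comp (binl A A') (bprr A' A)).
split; last by split; biprod_simpl.
exists (comp (binl A' A) (bprr A A') + comp (binr A' A) (bprl A A')).
by split; biprod_simpl; rewrite ?bsum_id // addrC bsum_id.
Qed.

(* The octahedron of [x] and a realization of [th] has a side realizing
   [y_* th], which vanishes; a section of it carries [th] back to [A]. *)
Lemma push_inflation_onto (Z' A B : C) (dl : ext (E C) Z' A) (x : hom A B) (y : hom B Z') :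
  realizes dl x y -> injective_obj Z' ->
  forall (Z : C) (th : ext (E C) Z B), exists th', th = push x th'.
Proof.
move=> Hdl HZ' Z th.
have [D [f [f' Hth]]] := real_ex th.
have [K [_ [_ [k [e [d [_ [_ [Hke [_ Hxd]]]]]]]]]] := ET4 Hdl Hth.
rewrite (HZ' _ (push y th)) in Hke.
have [s Hs] := realizes0_split Hke.
by exists (pull s d); rewrite push_pull Hxd -pull_comp Hs pull_id.
Qed.

Lemma ET4_split (A1 A2 Z B M : C) (i : hom A1 B) (p : hom B A2) (r : hom B A1)
    (th : ext (E C) Z B) (x : hom B M) (y : hom M Z) :
  realizes (0 : ext (E C) A2 A1) i p -> comp r i = idm A1 -> realizes th x y ->
  exists (K : C) (h : hom M K) (k : hom A2 K) (e : hom K Z) (d : ext (E C) K A1),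
    [/\ realizes d (comp x i) h, realizes (push p th) k e & d = pull e (push r th)].
Proof.
move=> Hip Hri Hth.
have [K [_ [h [k [e [d [[-> _] [Hd [Hke [_ Hid]]]]]]]]]] := ET4 Hip Hth.
exists K, h, k, e, d; split=> //.
by rewrite -push_pull -Hid -push_comp Hri push_id.
Qed.

Lemma injective_obj_iso (A B : C) (b : hom A B) :
  is_iso b -> injective_obj A -> injective_obj B.
Proof.
move=> [g [_ Hbg]] HA Z d.
by rewrite -(push_id d) -Hbg push_comp (HA _ (push g d)) pushm0.
Qed.

Lemma Obj_EinjP (X : C) : Obj (@Einj C) X <-> injective_obj X.
Proof.
split=> [HX Z d | HX Z d]; last exact: HX.
by rewrite -(push_id d); apply: HX.
Qed.

End Extriangulated.

Section Ideals.
Variable C : extriCat.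

Lemma gen_obj_ideal_ideal (P : objclass C) : is_ideal (gen_obj_ideal P).
Proof.
split.
- by move=> A B K [HK0 _ _] _.
- by move=> A B f g Hf Hg K HK HP; case: (HK) => _ HKD _; apply: HKD; [apply: Hf | apply: Hg].
- by move=> A B X Y h f g Hf K HK HP; case: (HK) => _ _ HKC; apply: HKC; apply: Hf.
Qed.

Lemma gen_obj_ideal_id (P : objclass C) (X : C) : P X -> gen_obj_ideal P (idm X).
Proof. by move=> HX K _; apply. Qed.

Lemma ideal_cancel_iso (K : morclass C) (X X' Z : C) (b : hom X X') (e : hom X' Z)
    (i : hom X Z) :
  is_ideal K -> is_iso b -> comp e b = i -> K X Z i -> K X' Z e.
Proof.
move=> [_ _ HKC] [g [_ Hbg]] <- Hi.
by have := HKC _ _ _ _ g _ (idm Z) Hi; rewrite comp1m -compA Hbg compm1.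
Qed.

Lemma Obj_zob (K : morclass C) : is_ideal K -> Obj K (zob C).
Proof. by move=> [HK0 _ _]; rewrite /Obj zob_id. Qed.

Lemma Obj_bsum (K : morclass C) (W1 W2 : C) :
  is_ideal K -> Obj K W1 -> Obj K W2 -> Obj K (bsum W1 W2).
Proof.
move=> [_ HKD HKC] H1 H2; rewrite /Obj -bsum_id; apply: HKD.
- by have := HKC _ _ _ _ (bprl W1 W2) _ (binl W1 W2) H1; rewrite comp1m.
- by have := HKC _ _ _ _ (bprr W1 W2) _ (binr W1 W2) H2; rewrite comp1m.
Qed.

Lemma gen_obj_ideal_factor (K : morclass C) (A B : C) (f : hom A B) :
  is_ideal K -> gen_obj_ideal (Obj K) f ->
  exists (W : C) (u : hom A W) (v : hom W B), Obj K W /\ f = comp v u.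
Proof.
move=> HK Hf.
apply: (Hf (fun A B f => exists (W : C) (u : hom A W) (v : hom W B),
  Obj K W /\ f = comp v u)) => [|X HX]; last by exists X, (idm X), (idm X); rewrite comp1m.
split.
- move=> X Y; exists (zob C), 0, 0; split; [exact: Obj_zob | by rewrite comp0m].
- move=> X Y _ _ [W1 [u1 [v1 [HW1 ->]]]] [W2 [u2 [v2 [HW2 ->]]]].
  exists (bsum W1 W2), (comp (binl W1 W2) u1 + comp (binr W1 W2) u2),
    (comp v1 (bprl W1 W2) + comp v2 (bprr W1 W2)).
  by split; [exact: Obj_bsum | biprod_simpl].
- move=> X Y X' Y' h _ g [W [u [v [HW ->]]]].
  by exists W, (comp u h), (comp g v); rewrite !compA.
Qed.

Lemma object_ideal_gen (K : morclass C) (P : objclass C) :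
  same_class K (gen_obj_ideal P) -> object_ideal K.
Proof.
move=> HKP A B f; split=> Hf.
- apply: ((HKP _ _ f).1 Hf); first exact: gen_obj_ideal_ideal.
  by move=> X /gen_obj_ideal_id /HKP HX; apply: gen_obj_ideal_id.
- apply/HKP; apply: Hf; first exact: gen_obj_ideal_ideal.
  by move=> X /HKP.
Qed.

End Ideals.

Section Perpendicular.
Variables (C : extriCat) (I : morclass C).
Local Notation push := (Defs.push (E C)).
Local Notation pull := (Defs.pull (E C)).
Local Notation Einj := (@Einj C).

Lemma perpE_ideal : is_ideal (perpE I).
Proof.
split.
- by move=> A B X Z m _ d; rewrite push0m pullm0.
- by move=> A B f g Hf Hg X Z m Hm d; rewrite push_addm pull_addd Hf // Hg // addr0.
- move=> A B X Y h f g Hf X' Z m Hm d.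
  by rewrite !push_comp -push_pull Hf // pushm0.
Qed.

Lemma diamond_inj_perpE (P : objclass C) (B : C) :
  (forall A, P A -> Obj (perpE I) A) ->
  diamond P (Obj Einj) B -> Obj (perpE I) B.
Proof.
move=> HP [A [Z [x [y [d [/HP HA /Obj_EinjP HZ Hxy]]]]]] X Z' m Hm th.
have [th' ->] := push_inflation_onto Hxy HZ th.
have Hmth' : pull m th' = 0 by have := HA _ _ m Hm th'; rewrite push_id.
by rewrite push_id -push_pull Hmth' pushm0.
Qed.

Lemma diamond_ideal_sub_perpE (P : objclass C) :
  (forall A, P A -> Obj (perpE I) A) ->
  sub_class (gen_obj_ideal (diamond P (Obj Einj))) (perpE I).
Proof.
move=> HP A B f; apply; first exact: perpE_ideal.
by move=> X; apply: diamond_inj_perpE.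
Qed.

Hypothesis HI : is_ideal I.

Lemma perpE_sub_diamond_ideal (P : objclass C) :
  enough_injectives C ->
  (forall Z : C, exists (X A : C) (i : hom X Z) (a : hom A X) (d : ext (E C) Z A),
      [/\ I i, Etri d a i & P A]) ->
  sub_class (perpE I) (gen_obj_ideal (diamond P (Obj Einj))).
Proof.
move=> Henough HIP A Y g Hg.
have [E0 [Z [e0 [p [dl [Hdl HE0]]]]]] := Henough A.
have [X [A' [i [a [dl' [HIi Hdl' HA']]]]]] := HIP Z.
have [M [x [y Hth]]] := real_ex (ext_pair dl' dl).
have HM : diamond P (Obj Einj) M.
  have [K [h [k [e [d [Hd Hke _]]]]]] := ET4_split (real_zero A A') (bprl_inl A' A) Hth.
  rewrite push_bprr_pair in Hke.
  have [b [Hb _]] := (real_class k e Hdl).1 Hke.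
  exists A', K, (comp x (binl A' A)), h, d; split=> //.
  exact/Obj_EinjP/(injective_obj_iso Hb).
have [K [h [k [e [d [Hd Hke Ed]]]]]] :=
  ET4_split (realizes0_swap A' A) (bprr_inr A' A) Hth.
rewrite push_bprl_pair in Hke; rewrite push_bprr_pair in Ed.
have [b [Hb [_ Hbe]]] := (real_class k e Hdl').1 Hke.
have HIe : I e := ideal_cancel_iso HI Hb Hbe HIi.
have [v <-] : exists v : hom M Y, comp v (comp x (binr A' A)) = g.
  by apply: (inflation_factor Hd); rewrite Ed push_pull; apply: Hg.
have [_ _ HKC] := gen_obj_ideal_ideal (diamond P (Obj Einj)).
by rewrite -[comp x _]comp1m; apply: HKC; apply: gen_obj_ideal_id.
Qed.

Lemma precover_of_special_precover (Z X : C) (i : hom X Z) :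
  object_ideal (perpE I) -> special_precover I i ->
  exists (N W : C) (q : hom N Z) (w : hom W N) (d : ext (E C) Z W),
    [/\ precover I q, Etri d w q & Obj (perpE I) W].
Proof.
move=> Hobj [HIi [A [B [A' [x [y [d [x' [d' [j [b [_ Hd' [_ _ Hjd] Hj]]]]]]]]]]]].
have [W [u [v [HW Ej]]]] := gen_obj_ideal_factor perpE_ideal ((Hobj _ _ j).1 Hj).
have [N [w [q Hq]]] := real_ex (push u d).
have Hud : push v (push u d) = pull (idm Z) d' by rewrite -push_comp -Ej Hjd.
have [n [_ Hn]] := real_morph Hq Hd' Hud.
exists N, W, q, w, (push u d); split=> //; split.
- have [_ _ HIC] := HI.
  by have := HIC _ _ _ _ n i (idm Z) HIi; rewrite -Hn !comp1m.
- move=> X' i' Hi'.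
  have [t <-] : exists t : hom X' N, comp q t = i'.
    apply: (deflation_factor Hq).
    by have := HW _ _ i' Hi' (push u d); rewrite push_id.
  by exists t.
Qed.

End Perpendicular.

Theorem proposition5p3 (C : extriCat) (I : morclass C) :
  enough_injectives C -> is_ideal I -> special_precovering I ->
  (condJ I <-> object_ideal (perpE I)) /\
  (forall J : morclass C, condJ_witness I J ->
     same_class (perpE I)
       (gen_obj_ideal (diamond (Obj J) (Obj (@Einj C))))).
Proof.
move=> Henough HI Hspecial.
have perpE_eq J : condJ_witness I J ->
    same_class (perpE I) (gen_obj_ideal (diamond (Obj J) (Obj (@Einj C)))).
  move=> [_ HJ Hprec] A B f; split.
  - apply: (perpE_sub_diamond_ideal HI Henough) => Z.
    have [X [A' [i [a [d [[HIi _] Had HA']]]]]] := Hprec Z.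
    by exists X, A', i, a, d.
  - by apply: diamond_ideal_sub_perpE => X /HJ.
split=> //; split=> [[J HJ] | Hobj].
- exact: object_ideal_gen (perpE_eq J HJ).
- exists (perpE I); split=> // Z.
  have [X [i Hi]] := Hspecial Z.
  exact: precover_of_special_precover Hi.
Qed.
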